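(* Let $(\Omega,\mathcal{F},\mathbb{P})$ be a complete probability space, let $E$ be a Polish space, and let $X=\{X_t\}_{t\geq0}$ be an $E$-valued stochastic process that is measurable, i.e. the map $(\omega,t)\mapsto X_t(\omega)$ is $\mathcal{F}\otimes\mathcal{B}([0,\infty))/\mathcal{B}(E)$-measurable. Let $AP$ be a set of atomic propositions and assign to each $a\in AP$ a Borel set $B_a\subset E$. Then for every MTL-formula $\phi$, the set $\llbracket\phi\rrbracket=\{(\omega,t)\in\Omega\times[0,\infty) : X(\omega),t\models\phi\}$ belongs to $\mathcal{F}\otimes\mathcal{B}([0,\infty))$, and for every $t\geq0$ the set $\llbracket\phi\rrbracket(t)=\{\omega\in\Omega : X(\omega),t\models\phi\}$ belongs to $\mathcal{F}$.
   Context: MTL-formulas are generated by the grammar $\phi::=a\mid\phi_1\wedge\phi_2\mid\lnot\phi\mid\phi_1\mathcal{U}_I\phi_2$, where $a\in AP$ and $I$ is an interval in $[0,\infty)$ (closed, open, or half-open; unbounded intervals allowed). The continuous semantics, for a path $X(\omega)$ ($\omega$ fixed) and $t\geq0$: $X(\omega),t\models a$ iff $X_t(\omega)\in B_a$; $X(\omega),t\models\lnot\phi$ iff not $X(\omega),t\models\phi$; $X(\omega),t\models\phi_1\wedge\phi_2$ iff both $X(\omega),t\models\phi_1$ and $X(\omega),t\models\phi_2$; $X(\omega),t\models\phi_1\mathcal{U}_I\phi_2$ iff there exists $s\in I$ such that $X(\omega),t+s\models\phi_2$ and for all $s'\in[t,t+s)$, $X(\omega),s'\models\phi_1$. A probability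 space is complete if every subset of a null set is measurable. *)

From HB Require Import structures.
From mathcomp Require Import all_boot all_order all_algebra.
From mathcomp Require Import all_classical all_reals all_analysis.
Set Implicit Arguments. Unset Strict Implicit. Unset Printing Implicit Defensive.
Import Order.TTheory GRing.Theory Num.Theory.
Local Open Scope classical_set_scope.
Local Open Scope ring_scope.

Definition borel_of (E : ptopologicalType) := g_sigma_algebraType (@open E).

Definition polish_space (R : realType) (E : ptopologicalType) : Prop :=
  (exists D : set E, countable D /\ dense D) /\
  exists dist : E -> E -> R,
    (forall x y, 0 <= dist x y) /\
        (forall x y, dist x y = 0 <-> x = y) /\
        (forall x y, dist x y = dist y x) /\
        (forall x y z, dist x z <= dist x y + dist y z) /\
        (forall A : set E, open A <->
            (forall x, A x -> exists e : R, 0 < e /\ [set y | dist x y < e] `<=` A)) /\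
        (forall u : nat -> E,
            (forall e : R, 0 < e -> exists N, forall m n, (N <= m)%N -> (N <= n)%N ->
               dist (u m) (u n) < e) ->
            exists x : E, u @ \oo --> x).

Inductive mtl (AP : Type) (R : realType) : Type :=
| MAtom of AP
| MAnd of mtl AP R & mtl AP R
| MNot of mtl AP R
| MUntil of interval R & mtl AP R & mtl AP R.

Fixpoint mtl_wf (AP : Type) (R : realType) (phi : mtl AP R) : Prop :=
  match phi with
  | MAtom _ => True
  | MAnd p q => mtl_wf p /\ mtl_wf q
  | MNot p => mtl_wf p
  | MUntil J p q => (forall s : R, s \in J -> 0 <= s) /\ mtl_wf p /\ mtl_wf q
  end.

Fixpoint mtl_sat (AP : Type) (R : realType) (E : Type) (B : AP -> set E)
    (x : R -> E) (phi : mtl AP R) (t : R) : Prop :=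
  match phi with
  | MAtom a => B a (x t)
  | MAnd p q => mtl_sat B x p t /\ mtl_sat B x q t
  | MNot p => ~ mtl_sat B x p t
  | MUntil J p q =>
      exists s, s \in J /\ mtl_sat B x q (t + s) /\
        (forall s', t <= s' -> s' < t + s -> mtl_sat B x p s')
  end.

From HB Require Import structures.
From mathcomp Require Import all_boot all_order all_algebra.
From mathcomp Require Import all_classical all_reals all_analysis.
From mathcomp Require Import measurable_realfun lra.
Import Order.TTheory GRing.Theory Num.Theory.
Local Open Scope classical_set_scope.
Local Open Scope ring_scope.

Set Implicit Arguments. Unset Strict Implicit. Unset Printing Implicit Defensive.

(* For
   phi U_J psi, the point (w, t) satisfies the formula iff psi holds at some
   v in t + J that does not exceed the debut (first entrance time after t) of
   the complement of the satisfaction set of phi.  Splitting J into countably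
   many compact intervals, it suffices that the debut of a product-measurable
   set is measurable and that the set of (w, t) for which a measurable set is
   hit within a random compact interval is measurable.  Both reduce to the
   measurable projection theorem: the projection onto Omega of a
   product-measurable set is a Souslin set over the measurable sets (via
   Souslin schemes of compact rectangles), and Souslin sets are measurable for
   a complete finite measure. *)

Section nat_pairing.
Local Open Scope nat_scope.

Definition pairn (k n : nat) : nat := (2 ^ k * n.*2.+1).-1.

Definition unpairn (m : nat) : nat * nat :=
  (logn 2 m.+1, (m.+1 %/ 2 ^ logn 2 m.+1)./2).

Lemma pairnS k n : (pairn k n).+1 = 2 ^ k * n.*2.+1.
Proof. by rewrite /pairn prednK // muln_gt0 expn_gt0. Qed.

Lemma pairnK k n : unpairn (pairn k n) = (k, n).
Proof.
have lognk : logn 2 (2 ^ k * n.*2.+1) = k.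
  rewrite lognM ?expn_gt0 // pfactorK // logn_coprime ?addn0 //.
  by rewrite coprime2n /= odd_double.
by rewrite /unpairn pairnS lognk mulKn ?expn_gt0 // -[_./2]/(uphalf n.*2) uphalf_double.
Qed.

Lemma unpairnK m : pairn (unpairn m).1 (unpairn m).2 = m.
Proof.
rewrite /pairn /unpairn /=; set e := logn 2 m.+1.
have ediv : 2 ^ e %| m.+1 by rewrite pfactor_dvdn.
have odd_q : odd (m.+1 %/ 2 ^ e).
  apply: contraT; rewrite -dvdn2 => /(dvdn_mul (dvdnn (2 ^ e))).
  by rewrite -expnSr [_ * (_ %/ _)]mulnC divnK // pfactor_dvdn // ltnn.
have -> : ((m.+1 %/ 2 ^ e)./2).*2.+1 = m.+1 %/ 2 ^ e.
  by rewrite -[RHS]odd_double_half odd_q.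
by rewrite mulnC divnK.
Qed.

Lemma leq_pairn k i n : i <= n -> pairn k i <= pairn k n.
Proof.
by move=> le_in; rewrite -ltnS !pairnS leq_mul2l ltnS leq_double le_in orbT.
Qed.

End nat_pairing.
Arguments pairn : simpl never.
Arguments unpairn : simpl never.

Lemma mkseqSl (T : Type) (f : nat -> T) n :
  mkseq f n.+1 = f 0%N :: mkseq (f \o succn) n.
Proof. by rewrite /mkseq /= -[1%N]addn0 iotaDl -map_comp. Qed.

Lemma take_mkseq (T : Type) (f : nat -> T) k n : (k <= n)%N ->
  take k (mkseq f n) = mkseq f k.
Proof. by move=> kn; rewrite /mkseq -map_take take_iota (minn_idPl kn). Qed.

Section souslin_operation.
Variable X : Type.

Definition souslin (C : seq nat -> set X) : set X :=
  [set x | exists f : nat -> nat, forall n, C (mkseq f n.+1) x].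

Definition souslin_class (K : set (set X)) : set (set X) :=
  [set A | exists C : seq nat -> set X, (forall s, K (C s)) /\ souslin C = A].

Lemma sub_souslin_class K : K `<=` souslin_class K.
Proof.
move=> A KA; exists (fun=> A); split => //.
by apply/seteqP; split => [x [f /(_ 0%N)] //|x Ax]; exists (fun=> 0%N).
Qed.

Lemma souslin_class_bigcup K (F : nat -> set X) : K set0 ->
  (forall k, souslin_class K (F k)) -> souslin_class K (\bigcup_k F k).
Proof.
move=> K0 /boolp.choice[C /all_and2[KC CF]].
(* The first index encodes both the member k of the union and the first index
   of the k-th scheme. *)
pose C' (s : seq nat) := if s is m :: r then
  C (unpairn m).1 ((unpairn m).2 :: r) else set0.
exists C'; split => [[|m r] //=|]; apply/seteqP; split => x.
- move=> [f Cfx]; exists (unpairn (f 0%N)).1 => //; rewrite -CF.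
  exists (fun i => if i is 0 then (unpairn (f 0%N)).2 else f i) => n.
  by have := Cfx n; rewrite !mkseqSl.
- move=> [k _]; rewrite -CF => -[f Cfx].
  exists (fun i => if i is 0 then pairn k (f 0%N) else f i) => n.
  by have := Cfx n; rewrite !mkseqSl /C' pairnK.
Qed.

Lemma souslin_class_bigcap K (F : nat -> set X) :
  (forall k, souslin_class K (F k)) -> souslin_class K (\bigcap_k F k).
Proof.
move=> /boolp.choice[C /all_and2[KC CF]].
(* The n-th index of the k-th scheme sits at position pairn k n; pairn being
   monotone in n, a prefix of length (pairn k n).+1 determines the first n.+1
   indices of the k-th scheme. *)
pose C' (s : seq nat) := let: (k, n) := unpairn (size s).-1 in
  C k (mkseq (fun i => nth 0%N s (pairn k i)) n.+1).
have C'E f k n : C' (mkseq f (pairn k n).+1) = C k (mkseq (f \o pairn k) n.+1).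
  rewrite /C' size_mkseq pairnK; congr (C k _); apply/eq_in_map => i.
  by rewrite mem_iota add0n ltnS => lein; rewrite nth_mkseq // ltnS leq_pairn.
exists C'; split => [s|]; first by rewrite /C'; case: unpairn.
apply/seteqP; split => x.
- by move=> [f Cfx] k _; rewrite -CF; exists (f \o pairn k) => n; rewrite -C'E.
- move=> Fx; have /boolp.choice[g Cgx] : forall k, exists g, forall n, C k (mkseq g n.+1) x.
    by move=> k; have := Fx k I; rewrite -CF.
  exists (fun m => g (unpairn m).1 (unpairn m).2) => m.
  rewrite -[m in mkseq _ m.+1]unpairnK C'E.
  case: (unpairn m) => k n; rewrite (@eq_mkseq _ _ (g k)) // => i.
  by rewrite /comp pairnK.
Qed.

Lemma souslin_class_setU K (A B : set X) : K set0 ->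
  souslin_class K A -> souslin_class K B -> souslin_class K (A `|` B).
Proof.
move=> K0 sA sB; rewrite -bigcup2E; apply: souslin_class_bigcup => // -[|[|n]] //.
exact: sub_souslin_class.
Qed.

Lemma souslin_class_setI K (A B : set X) :
  souslin_class K A -> souslin_class K B -> souslin_class K (A `&` B).
Proof.
move=> sA sB; have -> : A `&` B = \bigcap_k (if k is 0 then A else B).
  apply/seteqP; split=> [x [Ax Bx] [|k] //|x ABx].
  by split; [exact: (ABx 0%N) | exact: (ABx 1%N)].
by apply: souslin_class_bigcap => -[].
Qed.

Lemma souslin_branch (G C : seq nat -> set X) x :
  (forall s k, G (rcons s k) `<=` C (rcons s k)) -> G [::] x ->
  (forall s, G s x -> exists k, G (rcons s k) x) -> souslin C x.
Proof.
move=> GC Gx0 Gnext.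
have /boolp.choice[next Hnext] : forall s, exists k, G s x -> G (rcons s k) x.
  move=> s; have [/Gnext[k Gk]|nGs] := boolp.pselect (G s x); first by exists k.
  by exists 0%N.
pose fix branch n := if n is n'.+1 then rcons (branch n') (next (branch n')) else [::].
have branchE n : branch n = mkseq (next \o branch) n.
  by elim: n => // n IH; rewrite mkseqS -IH.
have Gbranch n : G (branch n) x by elim: n => // n IH; exact: Hnext.
exists (next \o branch) => n; rewrite mkseqS -branchE; apply: GC.
exact: Gbranch n.+1.
Qed.

End souslin_operation.

Section souslin_measurable.
Context d (T : measurableType d) (R : realType).
Variable mu : {finite_measure set T -> \bar R}.
Local Open Scope ereal_scope.

Lemma measurable_cover_min (Z : set T) : exists G, [/\ measurable G, Z `<=` G &
  forall G', measurable G' -> Z `<=` G' -> mu G <= mu G'].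
Proof.
pose m := ereal_inf [set mu G | G in [set G | measurable G /\ Z `<=` G]].
have m_fin : m \is a fin_num.
  rewrite ge0_fin_numE; last by apply/ereal_infP => _ [G _ <-].
  apply/ereal_inf_ltP; exists (mu setT); first by exists setT.
  by rewrite ltey_eq fin_num_measure.
have /boolp.choice[G HG] : forall n, exists G,
    [/\ measurable G, Z `<=` G & mu G < m + (n.+1%:R^-1)%:E].
  move=> n; have n_gt0 : (0 < n.+1%:R^-1 :> R)%R by rewrite invr_gt0.
  have [_ [G covG <-] ?] := lb_ereal_inf_adherent n_gt0 m_fin.
  by case: covG => mG ZG; exists G.
have mG n : measurable (G n) by case: (HG n).
exists (\bigcap_n G n); split; first exact: bigcapT_measurable.
  by move=> z Zz n _; case: (HG n) => _ /(_ z Zz).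
move=> G' mG' ZG'; apply/lee_addgt0Pr => e e0.
have [n ne] := ltr_add_invr e0; rewrite add0r in ne.
have capG_le : mu (\bigcap_n G n) <= mu (G n).
  by apply: le_measure; rewrite ?inE //; [exact: bigcapT_measurable|exact: bigcap_inf].
apply: (le_trans capG_le).
case: (HG n) => _ _ /ltW/le_trans; apply; apply: leeD; last by rewrite lee_fin ltW.
by apply: ereal_inf_lbound; exists G'.
Qed.

Lemma measurable_envelope (Z : set T) : exists G, [/\ measurable G, Z `<=` G &
  forall G', measurable G' -> Z `<=` G' -> mu (G `\` G') = 0].
Proof.
have [G [mG ZG Gmin]] := measurable_cover_min Z.
exists G; split => // G' mG' ZG'.
have GG'_min : mu G <= mu (G `&` G').
  by apply: Gmin; [exact: measurableI | move=> z Zz; split; [exact: ZG | exact: ZG']].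
have GG'_fin : mu (G `&` G') \is a fin_num.
  by apply: fin_num_measure; exact: measurableI.
apply/eqP; rewrite -measure_le0 -(subee GG'_fin) lee_suber_addr //.
by rewrite -measureDI.
Qed.

Lemma measurable_souslin (C : seq nat -> set T) : measure_is_complete mu ->
  (forall s, measurable (C s)) -> measurable (souslin C).
Proof.
move=> mu_complete mC.
(* Szpilrajn-Marczewski: take measurable envelopes H s of the parts A s of
   souslin C along the branches through s.  A point of H [::] outside
   souslin C must leave the envelopes at some node s, i.e. lie in Bad s, and
   every Bad s is null since A s is covered by the envelopes of its children. *)
pose A s := [set x | exists f, mkseq f (size s) = s /\ forall n, C (mkseq f n.+1) x].
have /boolp.choice[G HG] := fun s => measurable_envelope (A s).
pose H s := G s `&` (if s is [::] then setT else C s).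
have mH s : measurable (H s).
  by case: (HG s) => mG _ _; apply: measurableI => //; case: s {mG}.
have AH s : A s `<=` H s.
  case: (HG s) => _ AG _ x Ax; split; first exact: AG.
  by case: s {AG} Ax => // a s [f [<- /(_ (size s))]].
have H_negl s G' : measurable G' -> A s `<=` G' -> mu.-negligible (H s `\` G').
  case: (HG s) => mG _ G_null mG' AG'; exists (G s `\` G'); split.
  - exact: measurableD.
  - exact: G_null.
  - by move=> x [[Gx _] nG'x].
pose Bad s := H s `\` \bigcup_k H (rcons s k).
have Bad_negl s : mu.-negligible (Bad s).
  apply: H_negl; first exact: bigcupT_measurable.
  move=> x [f [fs Cfx]]; exists (f (size s)) => //; apply: AH.
  by exists f; rewrite size_rcons mkseqS fs.
have souslin_sub : H [::] `\` souslin C `<=` \bigcup_n Bad (odflt [::] (unpickle n)).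
  move=> x [Hx nCx]; apply: boolp.contrapT => nBad; apply: nCx.
  apply: (@souslin_branch _ H) => //; first by move=> [|a s] k y [].
  move=> s Hsx; apply: boolp.contrapT => nHk; apply: nBad; exists (pickle s) => //.
  by rewrite pickleK /=; split => // -[k _ Hk]; apply: nHk; exists k.
have CH : souslin C `<=` H [::] by move=> x [f Cfx]; apply: AH; exists f.
rewrite -(setIidr CH) -setDD; apply: measurableD => //; apply: mu_complete.
by apply: negligibleS souslin_sub _; exact: negligible_bigcup.
Qed.

End souslin_measurable.

Lemma is_interval_bigcup_itvcc (R : realType) (I : set R) : is_interval I ->
  exists ab : nat -> R * R, I = \bigcup_n `[(ab n).1, (ab n).2]%classic.
Proof.
move=> I_itv.
(* Endpoints are rationals, or inf I and sup I, which are the only points of I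
   that may fail to lie strictly between two other points of I. *)
pose lend (o : option rat) := if o is Some q then ratr q else inf I.
pose rend (o : option rat) := if o is Some q then ratr q else sup I.
have lendP s : I s -> exists o, I (lend o) /\ lend o <= s.
  move=> Is; have [[y Iy ys]|noy] := boolp.pselect (exists2 y, I y & y < s).
    have [q /[!in_itv]/andP[yq qs]] := rat_in_itvoo ys.
    by exists (Some q); split; [apply: (I_itv y s) => //; rewrite !ltW | exact: ltW].
  have s_lb : lbound I s by move=> y Iy; rewrite leNgt; apply/negP => ys; apply: noy; exists y.
  have infIs : inf I = s.
    apply/eqP; rewrite eq_le lb_le_inf ?andbT //; last by exists s.
    by apply: ge_inf => //; exists s.
  by exists None; rewrite /lend infIs.
have rendP s : I s -> exists o, I (rend o) /\ s <= rend o.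
  move=> Is; have [[y Iy sy]|noy] := boolp.pselect (exists2 y, I y & s < y).
    have [q /[!in_itv]/andP[sq qy]] := rat_in_itvoo sy.
    by exists (Some q); split; [apply: (I_itv s y) => //; rewrite !ltW | exact: ltW].
  have s_ub : ubound I s by move=> y Iy; rewrite leNgt; apply/negP => sy; apply: noy; exists y.
  have supIs : sup I = s.
    apply/eqP; rewrite eq_le ge_sup //=; last by exists s.
    by apply: ub_le_sup => //; exists s.
  by exists None; rewrite /rend supIs.
(* The junk value (1, 0) stands for the empty interval. *)
pose ab n := if unpickle n is Some (ql, qr) then
  (if boolp.pselect (I (lend ql) /\ I (rend qr)) is left _ then (lend ql, rend qr)
   else (1, 0)) else (1, 0).
exists ab; apply/seteqP; split => [s Is|s [n _]].
- have [ql [Il ls]] := lendP s Is; have [qr [Ir sr]] := rendP s Is.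
  exists (pickle (ql, qr)) => //=; rewrite /ab pickleK.
  by case: boolp.pselect => [_|[]//]; rewrite in_itv /= ls sr.
- rewrite /ab; case: unpickle => [[ql qr]|]; last by rewrite /= in_itv /=; lra.
  case: boolp.pselect => [[Il Ir]|_]; last by rewrite /= in_itv /=; lra.
  by rewrite /= in_itv /= => /andP[ls sr]; apply: (I_itv (lend ql) (rend qr)); rewrite ?ls.
Qed.

Lemma itvcc_common_point (R : realType) (a b : nat -> R) :
  (forall i j, a i <= b j) -> exists x, forall n, a n <= x <= b n.
Proof.
move=> ab; have a_ub : ubound (range a) (b 0%N) by move=> _ [i _ <-].
exists (sup (range a)) => n; apply/andP; split.
  by apply: ub_le_sup; [exists (b 0%N) | exists n].
by apply: ge_sup; [exists (a 0%N), 0%N | move=> _ [i _ <-]].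
Qed.

Section measurable_projection.
Context d (T : measurableType d) (R : realType).

Definition compact_rect : set (set (T * R)) :=
  [set Z | exists A (a b : R), measurable A /\ Z = A `*` `[a, b]%classic].

Lemma compact_rect0 : compact_rect set0.
Proof. by exists set0, 0, 0; rewrite set0X. Qed.

Lemma souslin_class_setX_itv (A : set T) (I : set R) : measurable A ->
  is_interval I -> souslin_class compact_rect (A `*` I).
Proof.
move=> mA /is_interval_bigcup_itvcc[ab ->]; rewrite setX_bigcupr.
apply: souslin_class_bigcup => [|n]; first exact: compact_rect0.
by apply: sub_souslin_class; exists A, (ab n).1, (ab n).2.
Qed.

(* Souslin classes are not closed under complements; the sets that are Souslin
   together with their complements form a sigma-algebra. *)
Definition bisouslin : set (set (T * R)) :=
  [set Z | souslin_class compact_rect Z /\ souslin_class compact_rect (~` Z)].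

Lemma bisouslin_setX_itv (A : set T) (i : interval R) : measurable A ->
  bisouslin (A `*` [set` i]).
Proof.
move=> mA; split; first exact/souslin_class_setX_itv/interval_is_interval.
have -> : ~` (A `*` [set` i]) = (~` A `*` `]-oo, +oo[) `|`
    (setT `*` [set` Interval -oo%O i.1]) `|` (setT `*` [set` Interval i.2 +oo%O]).
  have notin_i x : ~ x \in i <->
      [set` Interval -oo%O i.1] x \/ [set` Interval i.2 +oo%O] x.
    by rewrite -[~ _]/((~` [set` i]) x) setCitv.
  rewrite set_itvNyy; apply/seteqP; split => -[w x] /=.
  - move=> nAi; have [Aw|nAw] := boolp.pselect (A w); last by left; left.
    have /notin_i[Ji|Ji] : ~ x \in i by move=> ix; exact: nAi.
      by left; right.
    by right.
  - move=> [[[nAw _]|[_ Ji]]|[_ Ji]] [Aw ix]; first exact: nAw.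
      by apply: (notin_i x).2 ix; left.
    by apply: (notin_i x).2 ix; right.
do 2?apply: souslin_class_setU; try exact: compact_rect0.
all: apply: souslin_class_setX_itv; try exact: interval_is_interval.
all: by [exact: measurableC | exact: measurableT].
Qed.

Lemma bisouslin_sigma_algebra : sigma_algebra setT bisouslin.
Proof.
split.
- by rewrite -(set0X `]-oo, +oo[%classic); exact: bisouslin_setX_itv.
- by move=> Z [sZ sCZ]; rewrite setTD; split; rewrite ?setCK.
- move=> F /all_and2[sF sCF]; split; last by rewrite setC_bigcup; exact: souslin_class_bigcap.
  by apply: souslin_class_bigcup => //; exact: compact_rect0.
Qed.

Lemma bisouslin_setI (Z1 Z2 : set (T * R)) :
  bisouslin Z1 -> bisouslin Z2 -> bisouslin (Z1 `&` Z2).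
Proof.
move=> [s1 sC1] [s2 sC2]; split; first exact: souslin_class_setI.
by rewrite setCI; apply: souslin_class_setU => //; exact: compact_rect0.
Qed.

Lemma measurable_bisouslin (Z : set (T * R)) : measurable Z -> bisouslin Z.
Proof.
rewrite measurable_prod_measurableType => /(smallest_sub bisouslin_sigma_algebra).
apply=> _ [A mA [B mB <-]].
have AB_sigma : sigma_algebra setT [set B | bisouslin (A `*` B)].
  split => [|B' AB'|F AF] /=; first by rewrite setX0; case: bisouslin_sigma_algebra.
  - have -> : A `*` (setT `\` B') = (A `*` `]-oo, +oo[) `&` ~` (A `*` B').
      rewrite set_itvNyy; apply/seteqP; split => -[w x] /=.
        by move=> [Aw [_ nB'x]]; split => // -[].
      by move=> [[Aw _] nAB']; split => //; split => // B'x; exact: nAB'.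
    apply: bisouslin_setI; first exact: bisouslin_setX_itv.
    by case: bisouslin_sigma_algebra => _ + _; rewrite -setTD; apply.
  - by rewrite setX_bigcupr; case: bisouslin_sigma_algebra => _ _; apply.
have GB := congr1 (@^~ B) (RGenCInfty.measurableE R).
apply: (smallest_sub AB_sigma _ (eq_ind _ id mB _ GB)) => _ [x ->].
exact: bisouslin_setX_itv.
Qed.

(* The projection of souslin C is the Souslin set of the projections of C s,
   restricted to schemes whose intervals pairwise meet; by compactness, such
   nested intervals have a common point, which supplies the second coordinate. *)
Lemma souslin_class_fst (Z : set (T * R)) :
  souslin_class compact_rect Z -> souslin_class measurable (fst @` Z).
Proof.
move=> [C [Crect <-]].
have /boolp.choice[r Cr] : forall s, exists r : set T * (R * R),
    measurable r.1 /\ C s = r.1 `*` `[r.2.1, r.2.2]%classic.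
  by move=> s; have [A [a [b [mA ->]]]] := Crect s; exists (A, (a, b)).
pose A s := (r s).1; pose a s := (r s).2.1; pose b s := (r s).2.2.
have CE s : C s = A s `*` `[a s, b s]%classic by case: (Cr s).
pose nested (s : seq nat) := forall i j, (i < size s)%N -> (j < size s)%N ->
  a (take i.+1 s) <= b (take j.+1 s).
pose E s := if boolp.pselect (nested s) is left _ then A s else set0.
exists E; split=> [s|]; first by rewrite /E; case: boolp.pselect => _ //; case: (Cr s).
have nested_mkseq f n : nested (mkseq f n.+1) <->
    forall i j, (i <= n)%N -> (j <= n)%N -> a (mkseq f i.+1) <= b (mkseq f j.+1).
  by rewrite /nested size_mkseq; split=> ab i j ilt jlt;
    have := ab i j ilt jlt; rewrite !take_mkseq.
apply/seteqP; split => [w [f Efw]|_ [[w x] [f Cfx] <-]].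
- have Af n : A (mkseq f n.+1) w.
    by have := Efw n; rewrite /E; case: boolp.pselect.
  have ab i j : a (mkseq f i.+1) <= b (mkseq f j.+1).
    have := Efw (maxn i j); rewrite /E; case: boolp.pselect => // /nested_mkseq ab _.
    by apply: ab; rewrite ?leq_maxl ?leq_maxr.
  have [x abx] := itvcc_common_point ab.
  by exists (w, x) => //; exists f => n; rewrite CE; split => //=; rewrite in_itv /= abx.
- exists f => n; rewrite /E; case: boolp.pselect => [_|[]].
    by have := Cfx n; rewrite CE => -[].
  apply/nested_mkseq => i j _ _.
  have := Cfx i; rewrite CE => -[_ /=]; rewrite in_itv /= => /andP[ax _].
  have := Cfx j; rewrite CE => -[_ /=]; rewrite in_itv /= => /andP[_ xb].
  exact: le_trans ax xb.
Qed.

Lemma measurable_fst_image (mu : {finite_measure set T -> \bar R}) :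
  measure_is_complete mu ->
  forall Z : set (T * R), measurable Z -> measurable (fst @` Z).
Proof.
move=> mu_complete Z /measurable_bisouslin[/souslin_class_fst[C [mC <-]] _].
exact: measurable_souslin mu_complete mC.
Qed.

End measurable_projection.

Section debut.
Context d (T : measurableType d) (R : realType).
Implicit Types (S : set (T * R)) (p : T * R).

Definition debut S p : \bar R :=
  ereal_inf [set v%:E | v in [set v | S (p.1, v) /\ p.2 <= v]].

Lemma debut_ltP S p r :
  (debut S p < r)%E <-> exists v, [/\ S (p.1, v), p.2 <= v & (v%:E < r)%E].
Proof.
split=> [/ereal_inf_ltP[_ [v [Sv pv] <-] vr]|[v [Sv pv vr]]]; first by exists v.
by apply/ereal_inf_ltP; exists v%:E => //; exists v.
Qed.

Lemma debut_ge S p : (p.2%:E <= debut S p)%E.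
Proof. by apply/ereal_infP => _ [v [_ pv] <-]; rewrite lee_fin. Qed.

Lemma debut_le S p v : S (p.1, v) -> p.2 <= v -> (debut S p <= v%:E)%E.
Proof. by move=> Sv pv; apply: ereal_inf_lbound; exists v. Qed.

Lemma le_debutP S p v :
  (v%:E <= debut S p)%E <-> forall u, p.2 <= u -> u < v -> ~ S (p.1, u).
Proof.
split=> [vS u pu uv Su|noS].
  by have := le_trans vS (debut_le Su pu); rewrite lee_fin leNgt uv.
apply/ereal_infP => _ [u [Su pu] <-]; rewrite lee_fin leNgt.
by apply/negP => uv; exact: noS uv Su.
Qed.

Variable mu : {finite_measure set T -> \bar R}.
Hypothesis mu_complete : measure_is_complete mu.

Lemma measurable_hits_before S (c : R) : measurable S ->
  measurable [set p | exists v, [/\ S (p.1, v), p.2 <= v & v < c]].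
Proof.
move=> mS.
(* A hit at some time v > p.2 is witnessed by a rational in between. *)
have -> : [set p | exists v, [/\ S (p.1, v), p.2 <= v & v < c]] =
  (S `&` (setT `*` `]-oo, c[)) `|` \bigcup_(q : rat)
    (fst @` (S `&` (setT `*` `]ratr q, c[)) `*` `]-oo, ratr q[).
  apply/seteqP; split => [[w t] [v [Sv tv vc]]|[w t] [[St [_ /= tc]]|[q _]]] /=.
  - have [->|t_ne_v] := eqVneq t v; first by left; split => //=; rewrite in_itv.
    have [q /[!in_itv]/= /andP[tq qv]] : exists q : rat, ratr q \in `]t, v[.
      by apply: rat_in_itvoo; rewrite lt_neqAle t_ne_v.
    right; exists q => //; split => /=; last by rewrite in_itv.
    by exists (w, v) => //; split => //=; rewrite in_itv /= qv.
  - by exists t; split => //; move: tc; rewrite in_itv.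
  - move=> [[[w' v] [Sv [_ vqc]] /= <-] tqc]; move: vqc tqc.
    rewrite /= !in_itv /= => /andP[qv vc] tq.
    by exists v; split => //; rewrite ltW // (lt_trans tq).
apply: measurableU.
  by apply: measurableI => //; apply: measurableX => //; exact: measurable_itv.
apply: bigcupT_measurable_rat => q; apply: measurableX; last exact: measurable_itv.
apply: (measurable_fst_image mu_complete); apply: measurableI => //.
by apply: measurableX => //; exact: measurable_itv.
Qed.

Lemma measurable_debut S : measurable S -> measurable_fun [set: T * R] (debut S).
Proof.
move=> mS; apply: (measurability _ (ErealGenInftyO.measurableE R)).
move=> _ [_ [c ->] <-]; rewrite setTI.
have -> : debut S @^-1` `]-oo, c%:E[ =
    [set p | exists v, [/\ S (p.1, v), p.2 <= v & v < c]].
  apply/seteqP; split => p; rewrite /= in_itv /= debut_ltP => -[v [Sv pv vc]];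
    by exists v; split; rewrite // ?lte_fin in vc *.
exact: measurable_hits_before.
Qed.

Lemma measurable_hits_itv S (lo : T * R -> R) (hi : T * R -> \bar R) :
  measurable S -> measurable_fun setT lo -> measurable_fun setT hi ->
  measurable [set p | exists v, [/\ S (p.1, v), lo p <= v & (v%:E <= hi p)%E]].
Proof.
move=> mS mlo mhi; pose h p := debut S (p.1, lo p).
have mh : measurable_fun setT h.
  apply: measurableT_comp; first exact: measurable_debut.
  by apply: measurable_fun_pair => //; exact: measurable_fst.
(* Either the debut after lo p is below hi p, or S is hit exactly at it. *)
have -> : [set p | exists v, [/\ S (p.1, v), lo p <= v & (v%:E <= hi p)%E]] =
    [set p | h p < hi p]%E `|` ([set p | h p \is a fin_num] `&`
    ([set p | h p <= hi p]%E `&` (fun p => (p.1, fine (h p))) @^-1` S)).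
  apply/seteqP; split => p /=.
  - move=> [v [Sv lov vhi]]; have hv : (h p <= v%:E)%E by exact: debut_le.
    have [hhi|hih] := ltP (h p) (hi p); [by left | right].
    have vh : (v%:E <= h p)%E := le_trans vhi hih.
    have hvE : h p = v%:E by apply/eqP; rewrite eq_le hv vh.
    by rewrite hvE; split => //; rewrite -hvE.
  - move=> [/debut_ltP[v [Sv lov /ltW vhi]]|[hfin [hhi Sh]]]; first by exists v.
    exists (fine (h p)); split; rewrite ?fineK //.
    by rewrite -lee_fin fineK //; exact: (debut_ge S (p.1, lo p)).
apply: measurableU; first by rewrite -[X in measurable X]setTI; exact: measurable_lte.
apply: measurableI; first by rewrite -[X in measurable X]setTI; exact: emeasurable_fin_num.
apply: measurableI; first by rewrite -[X in measurable X]setTI; exact: measurable_lee.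
have mpair : measurable_fun setT (fun p => (p.1, fine (h p))).
  apply: measurable_fun_pair; first exact: measurable_fst.
  by apply: measurableT_comp => //; exact: fine_measurable.
by rewrite -[X in measurable X]setTI; exact: mpair.
Qed.

End debut.

Section mtl_measurability.
Context (R : realType) d (Omega : measurableType d).
Variable mu : {finite_measure set Omega -> \bar R}.
Hypothesis mu_complete : measure_is_complete mu.
Context d' (E : measurableType d') (X : R -> Omega -> E) (AP : Type) (B : AP -> set E).
Hypothesis mX : measurable_fun ([set: Omega] `*` [set t : R | 0 <= t])
  (fun p : Omega * R => X p.2 p.1).
Hypothesis mB : forall a, measurable (B a).

Definition sat_set (phi : mtl AP R) : set (Omega * R) :=
  [set p | 0 <= p.2 /\ mtl_sat B (fun t => X t p.1) phi p.2].

Let time_nonneg := [set: Omega] `*` [set t : R | 0 <= t].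

Let measurable_time_nonneg : measurable time_nonneg.
Proof.
apply: measurableX => //; rewrite (_ : [set t | 0 <= t] = `[0, +oo[%classic).
  exact: measurable_itv.
by apply/seteqP; split => t; rewrite /= in_itv /= andbT.
Qed.

(* (w, t) satisfies phi U_J psi iff psi holds at some v in t + J such that
   phi holds on [t, v), i.e. v is at most the debut after t of the
   complement of sat_set phi. *)
Lemma sat_set_until (J : interval R) (ab : nat -> R * R) phi psi :
  (forall s, s \in J -> 0 <= s) ->
  [set` J] = \bigcup_n `[(ab n).1, (ab n).2]%classic ->
  sat_set (MUntil J phi psi) = time_nonneg `&` \bigcup_n
    [set p | exists v, [/\ sat_set psi (p.1, v), p.2 + (ab n).1 <= v &
       (v%:E <= mine (p.2 + (ab n).2)%:E (debut (~` sat_set phi) p))%E]].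
Proof.
move=> J_ge0 Jab.
apply/seteqP; split => [[w t] [t0 [s [sJ [psi_ts phi_before]]]]|
                        [w t] [[_ t0] [n _ [v [[v0 psi_v] tav]]]]] /=.
- have : [set` J] s by []; rewrite Jab => -[n _].
  rewrite /= in_itv /= => /andP[a_s s_b]; split => //; exists n => //.
  exists (t + s); split; first by split=> //; rewrite addr_ge0 // J_ge0.
    by rewrite lerD2l.
  rewrite le_min lee_fin lerD2l s_b /=; apply/le_debutP => u tu ut [] /=.
  by split; [exact: le_trans tu | exact: phi_before].
- move: tav; rewrite /= le_min lee_fin => tav /andP[vtb /le_debutP vH].
  have vtE : t + (v - t) = v by rewrite addrC subrK.
  split => //; exists (v - t); rewrite vtE; split; last split => // u tu uv.
  + suff : [set` J] (v - t) by [].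
    by rewrite Jab; exists n => //=; rewrite in_itv /=; apply/andP; split; lra.
  + by have /boolp.contrapT[] := vH u tu uv.
Qed.

Lemma measurable_sat_until (J : interval R) phi psi :
  (forall s, s \in J -> 0 <= s) ->
  measurable (sat_set phi) -> measurable (sat_set psi) ->
  measurable (sat_set (MUntil J phi psi)).
Proof.
move=> J_ge0 mphi mpsi.
have [ab Jab] := is_interval_bigcup_itvcc (@interval_is_interval _ J).
rewrite (sat_set_until _ _ J_ge0 Jab).
apply: measurableI => //; apply: bigcupT_measurable => n.
apply: (measurable_hits_itv mu_complete mpsi).
  by apply: measurable_funD => //; exact: measurable_snd.
apply: measurable_mine; last exact: (measurable_debut mu_complete (measurableC mphi)).
by apply/measurable_EFinP; apply: measurable_funD => //; exact: measurable_snd.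
Qed.

Lemma measurable_sat_set phi : mtl_wf phi -> measurable (sat_set phi).
Proof.
elim: phi => [a|phi IHphi psi IHpsi|phi IHphi|J phi IHphi psi IHpsi] /=.
- move=> _; rewrite (_ : sat_set _ = time_nonneg `&` (fun p => X p.2 p.1) @^-1` B a).
    exact: mX.
  by apply/seteqP; split => -[w t]; rewrite /sat_set /= => -[] //; case.
- move=> [/IHphi mphi /IHpsi mpsi].
  rewrite (_ : sat_set _ = sat_set phi `&` sat_set psi); first exact: measurableI.
  apply/seteqP; split => -[w t]; rewrite /sat_set /=; first by move=> [t0 [? ?]].
  by move=> [[t0 ?] [_ ?]].
- move=> /IHphi mphi; rewrite (_ : sat_set _ = time_nonneg `\` sat_set phi).
    exact: measurableD.
  apply/seteqP; split => -[w t]; rewrite /sat_set /=.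
    by move=> [t0 nphi]; split=> [|[]].
  by move=> [[_ t0] nphi]; split => // phit; exact: nphi.
- move=> [J_ge0 [/IHphi mphi /IHpsi mpsi]].
  exact: measurable_sat_until.
Qed.

End mtl_measurability.

Theorem theorem4p7 (R : realType) (d : measure_display) (Omega : measurableType d)
  (P : probability Omega R) (E : ptopologicalType) (X : R -> Omega -> E)
  (AP : Type) (B : AP -> set (borel_of E)) :
  measure_is_complete P ->
  polish_space R E ->
  measurable_fun ([set: Omega] `*` [set t : R | 0 <= t])
    (fun p : Omega * R => (X p.2 p.1 : borel_of E)) ->
  (forall a, measurable (B a)) ->
  forall phi : mtl AP R, mtl_wf phi ->
    measurable [set p : Omega * R | 0 <= p.2 /\ mtl_sat B (fun t => X t p.1) phi p.2]
    /\ (forall t : R, 0 <= t -> measurable [set w : Omega | mtl_sat B (fun s => X s w) phi t]).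
Proof.
move=> P_complete _ mX mB phi wf_phi.
have msat := measurable_sat_set P_complete mX mB wf_phi.
split=> // t t0.
rewrite (_ : [set w | _] = ysection (sat_set (X : R -> Omega -> borel_of E) B phi) t).
  exact: measurable_ysection.
by apply/seteqP; split => w; rewrite /ysection /= inE; [split | case].
Qed.
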